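(* There is an absolute constant $C\ge0$ such that the following holds. Assume $\bar u\in\mathbb{R}^n_{>0}$, $f:[0,\bar u]\to\mathbb{R}$ is differentiable, nonnegative, DR-submodular with $L$-Lipschitz gradient, $\mathcal{P}\subseteq[0,\bar u]$ is nonempty compact convex down-closed with diameter $D$, and $x^*\in\arg\max_{x\in\mathcal{P}}f(x)$. Running the non-monotone Frank-Wolfe procedure (defined in the context) with step size $\gamma\in(0,1]$, for every $k=1,\dots,K$, $$f(x^{(k)})\ge t^{(k)}e^{-t^{(k)}}f(x^* )-\frac{LD^2}{2}k\gamma^2-C\gamma^2 f(x^* ).$$
   Context: Inequalities between vectors are componentwise. Down-closed: $x\in\mathcal{P}$, $0\le y\le x$ imply $y\in\mathcal{P}$; diameter $D=\max_{x,y\in\mathcal{P}}\|x-y\|$. DR-submodular: for all $a\le b$ in the domain, $i\in[n]$, $k\ge0$ with $a+ke_i,b+ke_i$ in the domain, $f(a+ke_i)-f(a)\ge f(b+ke_i)-f(b)$. $L$-Lipschitz gradient: $\|\nabla f(x)-\nabla f(y)\|\le L\|x-y\|$. Non-monotone Frank-Wolfe with step size $\gamma\in(0,1]$: $x^{(0)}=0$, $t^{(0)}=0$; while $t^{(k)}<1$: choose $v^{(k)}\in\arg\max\{\langle v,\nabla f(x^{(k)})\rangle: v\in\mathcal{P},\ v\le\bar u-x^{(k)}\}$, set $\gamma_k=\min\{\gamma,1-t^{(k)}\}$, $x^{(k+1)}=x^{(k)}+\gamma_k v^{(k)}$, $t^{(k+1)}=t^{(k)}+\gamma_k$. $K$ is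 the total number of iterations ($t^{(K)}=1$). *)

From Stdlib Require Import Reals.
From mathcomp Require Import all_boot.
Set Implicit Arguments.
Unset Strict Implicit.
Unset Printing Implicit Defensive.
Open Scope R_scope.

Definition vec (n : nat) := 'I_n -> R.

Definition vzero (n : nat) : vec n := fun _ => 0.
Arguments vzero n _ : clear implicits.
Definition vadd n (x y : vec n) : vec n := fun i => x i + y i.
Definition vsub n (x y : vec n) : vec n := fun i => x i - y i.
Definition vscale n (a : R) (x : vec n) : vec n := fun i => a * x i.

Definition dot n (x y : vec n) : R := \big[Rplus/0]_(i < n) (x i * y i).
Definition norm n (x : vec n) : R := sqrt (dot x x).

Definition vle n (x y : vec n) : Prop := forall i, x i <= y i.

Definition in_box n (u x : vec n) : Prop := vle (vzero n) x /\ vle x u.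

Definition shift n (x : vec n) (i : 'I_n) (k : R) : vec n :=
  fun j => if j == i then x j + k else x j.

Definition has_gradient n (u : vec n) (f : vec n -> R) (g : vec n -> vec n) : Prop :=
  forall x, in_box u x ->
  forall eps, 0 < eps -> exists delta, 0 < delta /\
    forall y, in_box u y -> norm (vsub y x) < delta ->
      Rabs (f y - f x - dot (g x) (vsub y x)) <= eps * norm (vsub y x).

Definition DR_submodular n (u : vec n) (f : vec n -> R) : Prop :=
  forall a b (i : 'I_n) (k : R),
    in_box u a -> in_box u b -> vle a b -> 0 <= k ->
    in_box u (shift a i k) -> in_box u (shift b i k) ->
    f (shift a i k) - f a >= f (shift b i k) - f b.

Definition lipschitz_grad n (u : vec n) (g : vec n -> vec n) (L : R) : Prop :=
  forall x y, in_box u x -> in_box u y ->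
    norm (vsub (g x) (g y)) <= L * norm (vsub x y).

Definition closed_set n (P : vec n -> Prop) : Prop :=
  forall (s : nat -> vec n) (x : vec n),
    (forall m, P (s m)) ->
    (forall eps, 0 < eps -> exists N, forall m, (N <= m)%nat -> norm (vsub (s m) x) < eps) ->
    P x.
Definition bounded_set n (P : vec n -> Prop) : Prop :=
  exists M, forall x, P x -> norm x <= M.
(* compact in R^n = closed and bounded (Heine-Borel) *)
Definition compact_set n (P : vec n -> Prop) : Prop := closed_set P /\ bounded_set P.
Definition convex_set n (P : vec n -> Prop) : Prop :=
  forall x y (lam : R), P x -> P y -> 0 <= lam <= 1 ->
    P (vadd (vscale lam x) (vscale (1 - lam) y)).
Definition down_closed n (P : vec n -> Prop) : Prop :=
  forall x y, P x -> vle (vzero n) y -> vle y x -> P y.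

Definition is_diameter n (P : vec n -> Prop) (D : R) : Prop :=
  (forall x y, P x -> P y -> norm (vsub x y) <= D) /\
  (exists x y, P x /\ P y /\ norm (vsub x y) = D).

Definition fw_run n (u : vec n) (P : vec n -> Prop) (g : vec n -> vec n)
  (gamma : R) (x : nat -> vec n) (v : nat -> vec n) (t : nat -> R) (K : nat) : Prop :=
  (forall i, x 0%nat i = 0) /\ t 0%nat = 0 /\
  (forall k, (k < K)%nat -> t k < 1) /\ t K = 1 /\
  (forall k, (k < K)%nat ->
     (P (v k) /\ vle (v k) (vsub u (x k)) /\
      (forall w, P w -> vle w (vsub u (x k)) ->
         dot w (g (x k)) <= dot (v k) (g (x k)))) /\
     (forall i, x (S k) i = x k i + Rmin gamma (1 - t k) * v k i) /\
     t (S k) = t k + Rmin gamma (1 - t k)).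

(* Along a nonnegative direction a DR-submodular function is concave.  For y <= z this gives,
   via one-variable facts about concave differentiable functions on [0, 1] (proved by
   discretising the segment), the bound f z - f y <= <grad f y, z - y>, the chord inequality,
   and, with an L-Lipschitz gradient, f z - f y >= <grad f y, z - y> - L/2 |z - y|^2.
   The iterates satisfy x^(k) <= (1 - (1 - gamma)^k) u, which by concavity on the ray from
   xstar through max(x^(k), xstar) yields f (max(x^(k), xstar)) >= (1 - gamma)^k f(xstar).
   Comparing v^(k) with the feasible direction max(x^(k), xstar) - x^(k) gives the recursion
   f(x^(k+1)) >= (1 - c) f(x^(k)) + c (1 - gamma)^k f(xstar) - L c^2 D^2 / 2  (c = gamma_k),
   which unrolls to f(x^(k)) >= k gamma (1 - gamma)^(k-1) f(xstar) - k L D^2 gamma^2 / 2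
   before the last step; there (1 - gamma)^(k-1) >= exp(-k gamma) when gamma <= 1/5, and the
   final, truncated step costs gamma^2 f(xstar). *)

From Stdlib Require Import Reals Lra FunctionalExtensionality.
From mathcomp Require Import all_boot.
Set Implicit Arguments.
Unset Strict Implicit.
Unset Printing Implicit Defensive.
Open Scope R_scope.

Lemma sum_add n (F G : 'I_n -> R) :
  \big[Rplus/0]_(i < n) (F i + G i) =
  \big[Rplus/0]_(i < n) F i + \big[Rplus/0]_(i < n) G i.
Proof.
apply: (big_rec3 (fun a b c => a = b + c)); first lra.
by move=> i y1 y2 y3 _ ->; lra.
Qed.

Lemma sum_scale n (c : R) (F : 'I_n -> R) :
  \big[Rplus/0]_(i < n) (c * F i) = c * \big[Rplus/0]_(i < n) F i.
Proof. by rewrite (big_endo (Rmult c) (Rmult_plus_distr_l c) (Rmult_0_r c)). Qed.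

Lemma dot_ge0 n (a : vec n) : 0 <= dot a a.
Proof. by apply: (big_ind (fun s => 0 <= s)) => [|s1 s2|i _]; [lra|lra|nra]. Qed.

Lemma dot_comm n (a b : vec n) : dot a b = dot b a.
Proof. by apply: eq_bigr => i _; lra. Qed.

Lemma dot_scaler n (a b : vec n) c : dot a (vscale c b) = c * dot a b.
Proof. by rewrite /dot -sum_scale; apply: eq_bigr => i _; rewrite /vscale; lra. Qed.

Lemma dot_subl n (a b c : vec n) : dot (vsub a b) c = dot a c - dot b c.
Proof.
rewrite (_ : dot a c - dot b c = dot a c + (-1) * dot b c); last by ring.
by rewrite /dot -sum_scale -sum_add; apply: eq_bigr => i _; rewrite /vsub; lra.
Qed.

Lemma dot_combination n (a b : vec n) p q :
  let w := fun i => p * a i + q * b i in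
  dot w w = p * p * dot a a + 2 * p * q * dot a b + q * q * dot b b.
Proof.
rewrite /dot -!sum_scale -!sum_add.
by apply: eq_bigr => i _; ring.
Qed.

Lemma norm_ge0 n (a : vec n) : 0 <= norm a.
Proof. exact: sqrt_pos. Qed.

Lemma norm_scale n c (w : vec n) : norm (vscale c w) = Rabs c * norm w.
Proof.
rewrite /norm (_ : dot (vscale c w) (vscale c w) = (c * c) * dot w w); last first.
  by rewrite /dot -sum_scale; apply: eq_bigr => i _; rewrite /vscale; ring.
rewrite sqrt_mult; [|nra|exact: dot_ge0].
by rewrite -(sqrt_Rsqr_abs c).
Qed.

Lemma cauchy_schwarz n (a b : vec n) : Rabs (dot a b) <= norm a * norm b.
Proof.
have hA := dot_ge0 a; have hB := dot_ge0 b.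
(* the Gram determinant is nonnegative: expand |<b,b> a - <a,b> b|^2, its mirror image and
   |a +- b|^2, the last two settling the degenerate case a = b = 0 *)
have h1 := dot_ge0 (fun i => dot b b * a i + (- dot a b) * b i).
have h2 := dot_ge0 (fun i => (- dot a b) * a i + dot a a * b i).
have h3 := dot_ge0 (fun i => 1 * a i + 1 * b i).
have h4 := dot_ge0 (fun i => 1 * a i + (-1) * b i).
rewrite !dot_combination /= in h1 h2 h3 h4.
have gram : dot a b * dot a b <= dot a a * dot b b.
  case: (Rle_lt_dec (dot a b * dot a b) (dot a a * dot b b)) => // hlt.
  have hB0 : dot b b = 0 by nra.
  have hA0 : dot a a = 0 by nra.
  rewrite hA0 hB0 in hlt h3 h4; nra.
rewrite /norm -sqrt_mult // -sqrt_Rsqr_abs.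
by apply: sqrt_le_1_alt; rewrite /Rsqr.
Qed.

Lemma in_box_between n (u lo hi y : vec n) :
  in_box u lo -> in_box u hi -> vle lo y -> vle y hi -> in_box u y.
Proof.
move=> [hlo _] [_ hhi] hly hyh; split => i.
- exact: Rle_trans (hlo i) (hly i).
- exact: Rle_trans (hyh i) (hhi i).
Qed.

Lemma DR_submodular_vadd n (u : vec n) f (a b d : vec n) :
  DR_submodular u f -> in_box u a -> in_box u b -> vle a b -> vle (vzero n) d ->
  in_box u (vadd a d) -> in_box u (vadd b d) ->
  f (vadd b d) - f b <= f (vadd a d) - f a.
Proof.
move=> hDR ha hb hab hd had hbd.
(* add d one coordinate at a time: [trunc m] keeps the first m coordinates of d *)
pose trunc (m : nat) : vec n := fun j => if (j < m)%N then d j else 0.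
have trunc_bounds m j : 0 <= trunc m j <= d j.
  by rewrite /trunc; have := hd j; rewrite /vzero; case: (j < m)%N; lra.
have box_trunc c m : in_box u c -> in_box u (vadd c d) -> in_box u (vadd c (trunc m)).
  move=> hc hcd; apply: (in_box_between hc hcd) => i; rewrite /vadd;
    have := trunc_bounds m i; lra.
have trunc_succ m (hm : (m < n)%N) c :
    vadd c (trunc m.+1) = shift (vadd c (trunc m)) (Ordinal hm) (d (Ordinal hm)).
  apply: functional_extensionality => j; rewrite /vadd /trunc /shift ltnS leq_eqVlt.
  case: (eqVneq j (Ordinal hm)) => [-> /=|hne]; first by rewrite eqxx ltnn /=; lra.
  by rewrite (_ : (nat_of_ord j == m) = false) //; apply: contraNF hne => /eqP e;
    apply/eqP; apply: val_inj.
have trunc0 c : vadd c (trunc 0%N) = c.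
  by apply: functional_extensionality => j; rewrite /vadd /trunc /=; lra.
have truncn c : vadd c (trunc n) = vadd c d.
  by apply: functional_extensionality => j; rewrite /vadd /trunc ltn_ord.
suff claim m : (m <= n)%N ->
    f (vadd b (trunc m)) - f b <= f (vadd a (trunc m)) - f a.
  by rewrite -!truncn; apply: claim.
elim: m => [|m IH] hmn; first by rewrite !trunc0; lra.
have := IH (ltnW hmn); rewrite !(trunc_succ m hmn).
have hle : vle (vadd a (trunc m)) (vadd b (trunc m)).
  by move=> i; rewrite /vadd; have := hab i; lra.
have := hDR _ _ (Ordinal hmn) (d (Ordinal hmn))
  (box_trunc _ m ha had) (box_trunc _ m hb hbd) hle.
rewrite -!(trunc_succ m hmn).
move=> /(_ _ (box_trunc _ m.+1 ha had) (box_trunc _ m.+1 hb hbd)).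
have := hd (Ordinal hmn); rewrite /vzero => hd0 /(_ hd0); lra.
Qed.

Definition concave_on_unit (phi : R -> R) : Prop :=
  forall a b h, 0 <= a -> a <= b -> 0 <= h -> b + h <= 1 ->
    phi (b + h) - phi b <= phi (a + h) - phi a.

Definition derivative_on_unit (phi dphi : R -> R) : Prop :=
  forall s, 0 <= s <= 1 -> forall eps, 0 < eps -> exists delta, 0 < delta /\
    forall r, 0 <= r <= 1 -> Rabs (r - s) < delta ->
      Rabs (phi r - phi s - (r - s) * dphi s) <= eps * Rabs (r - s).

Lemma concave_on_unit_reflect phi :
  concave_on_unit phi -> concave_on_unit (fun s => phi (1 - s)).
Proof.
move=> hphi a b h ha hab hh hbh.
have := hphi (1 - b - h) (1 - a - h) h ltac:(lra) ltac:(lra) hh ltac:(lra).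
have e1 c : 1 - c - h + h = 1 - c by ring.
have e2 c : 1 - c - h = 1 - (c + h) by ring.
rewrite !e1 !e2; lra.
Qed.

Lemma derivative_on_unit_reflect phi dphi : derivative_on_unit phi dphi ->
  derivative_on_unit (fun s => phi (1 - s)) (fun s => - dphi (1 - s)).
Proof.
move=> hphi s hs eps heps.
have [delta [hdelta hd]] := hphi (1 - s) ltac:(lra) eps heps.
exists delta; split => // r hr hrs.
have e : 1 - r - (1 - s) = - (r - s) by ring.
have := hd (1 - r) ltac:(lra); rewrite e Rabs_Ropp => /(_ hrs).
by rewrite (_ : - (r - s) * dphi (1 - s) = (r - s) * - dphi (1 - s)) //; ring.
Qed.

Section Restrict.
Variables (a b : R).
Hypotheses (ha : 0 <= a) (hab : a <= b) (hb : b <= 1).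

Lemma concave_on_unit_restrict phi :
  concave_on_unit phi -> concave_on_unit (fun s => phi (a + s * (b - a))).
Proof.
move=> hphi a' b' h ha' hab' hh hbh.
have := hphi (a + a' * (b - a)) (a + b' * (b - a)) (h * (b - a)).
have e c : a + (c + h) * (b - a) = a + c * (b - a) + h * (b - a) by ring.
by rewrite !e; apply; nra.
Qed.

Lemma derivative_on_unit_restrict phi dphi : derivative_on_unit phi dphi ->
  derivative_on_unit (fun s => phi (a + s * (b - a)))
                     (fun s => (b - a) * dphi (a + s * (b - a))).
Proof.
move=> hphi s hs eps heps.
have [delta [hdelta hd]] := hphi (a + s * (b - a)) ltac:(nra) eps heps.
exists delta; split => // r hr hrs.
have e : a + r * (b - a) - (a + s * (b - a)) = (r - s) * (b - a) by ring.
have habs : Rabs ((r - s) * (b - a)) <= Rabs (r - s).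
  rewrite Rabs_mult (Rabs_pos_eq (b - a)); last by lra.
  have := Rabs_pos (r - s); nra.
have := hd (a + r * (b - a)) ltac:(nra); rewrite e => /(_ (Rle_lt_trans _ _ _ habs hrs)).
rewrite (_ : (r - s) * (b - a) * dphi (a + s * (b - a))
           = (r - s) * ((b - a) * dphi (a + s * (b - a)))); last by ring.
move=> /Rle_trans; apply; apply: Rmult_le_compat_l; lra.
Qed.

End Restrict.

Lemma concave_on_unit_grid phi h m : concave_on_unit phi -> 0 <= h -> INR m * h <= 1 ->
  phi (INR m * h) - phi 0 <= INR m * (phi h - phi 0).
Proof.
move=> concave_phi hh; elim: m => [|m IH] hm; first by rewrite /= !Rmult_0_l; lra.
have hm0 := pos_INR m.
rewrite S_INR in hm *.
have := concave_phi 0 (INR m * h) h (Rle_refl 0) ltac:(nra) hh ltac:(lra).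
rewrite Rplus_0_l (_ : INR m * h + h = (INR m + 1) * h); last by ring.
have := IH ltac:(nra); lra.
Qed.

Lemma chord_le_derivative0 phi dphi : concave_on_unit phi -> derivative_on_unit phi dphi ->
  phi 1 - phi 0 <= dphi 0.
Proof.
move=> concave_phi derivative_phi.
apply: Rle_plus_epsilon => eps heps.
have [delta [hdelta hd]] := derivative_phi 0 (conj (Rle_refl 0) Rle_0_1) eps heps.
have [N [hN hN0]] := archimed_cor1 _ (Rmin_pos _ _ hdelta Rlt_0_1).
have hNpos : 0 < INR N by apply: lt_0_INR.
set h := / INR N in hN.
have hh : 0 < h by apply: Rinv_0_lt_compat.
have hh1 : h <= 1 by have := Rmin_r delta 1; lra.
have := concave_on_unit_grid (m := N) concave_phi (Rlt_le _ _ hh).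
rewrite Rinv_r -/h; last by lra.
move=> /(_ (Rle_refl 1)) hgrid.
have := hd h (conj (Rlt_le _ _ hh) hh1).
rewrite Rminus_0_r Rabs_pos_eq; last by lra.
move=> /(_ ltac:(have := Rmin_l delta 1; lra)) /(Rle_trans _ _ _ (Rle_abs _)) hupper.
have -> : dphi 0 + eps = INR N * (h * dphi 0 + eps * h) by rewrite /h; field; lra.
apply: Rle_trans hgrid _; apply: Rmult_le_compat_l; lra.
Qed.

Lemma derivative1_le_chord phi dphi : concave_on_unit phi -> derivative_on_unit phi dphi ->
  dphi 1 <= phi 1 - phi 0.
Proof.
move=> hphi hdphi.
have := chord_le_derivative0 (concave_on_unit_reflect hphi) (derivative_on_unit_reflect hdphi).
by rewrite Rminus_0_r Rminus_diag; lra.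
Qed.

Section Slopes.
Variables (phi dphi : R -> R).
Hypothesis concave_phi : concave_on_unit phi.
Hypothesis derivative_phi : derivative_on_unit phi dphi.

Lemma slope_le_derivative_left a b : 0 <= a <= b -> b <= 1 ->
  phi b - phi a <= (b - a) * dphi a.
Proof.
move=> [ha hab] hb.
have := chord_le_derivative0 (concave_on_unit_restrict ha hab hb concave_phi)
  (derivative_on_unit_restrict ha hab hb derivative_phi).
by rewrite Rmult_0_l Rmult_1_l Rplus_0_r Rplus_minus.
Qed.

Lemma derivative_right_le_slope a b : 0 <= a <= b -> b <= 1 ->
  (b - a) * dphi b <= phi b - phi a.
Proof.
move=> [ha hab] hb.
have := derivative1_le_chord (concave_on_unit_restrict ha hab hb concave_phi)
  (derivative_on_unit_restrict ha hab hb derivative_phi).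
by rewrite Rmult_0_l Rmult_1_l Rplus_0_r Rplus_minus.
Qed.

Lemma concave_on_unit_chord s : 0 <= s <= 1 ->
  (1 - s) * phi 0 + s * phi 1 <= phi s.
Proof.
move=> hs.
have hleft := derivative_right_le_slope (a := 0) (b := s) ltac:(lra) ltac:(lra).
have hright := slope_le_derivative_left (a := s) (b := 1) ltac:(lra) ltac:(lra).
rewrite Rminus_0_r in hleft.
have := Rmult_le_compat_l (1 - s) _ _ ltac:(lra) hleft.
have := Rmult_le_compat_l s _ _ ltac:(lra) hright.
lra.
Qed.

Lemma derivative_lower_bound_grid c h m :
  (forall s, 0 <= s <= 1 -> dphi 0 - c * s <= dphi s) -> 0 < h -> INR m * h <= 1 ->
  INR m * h * dphi 0 - c * (h * h) * (INR m * (INR m + 1) / 2) <= phi (INR m * h) - phi 0.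
Proof.
move=> hc hh; elim: m => [|m IH] hm; first by rewrite /= !Rmult_0_l; lra.
have hm0 := pos_INR m.
rewrite S_INR in hm *.
have hstep := derivative_right_le_slope (a := INR m * h) (b := (INR m + 1) * h)
  ltac:(split; nra) hm.
rewrite (_ : (INR m + 1) * h - INR m * h = h) in hstep; last by ring.
have := hc ((INR m + 1) * h) ltac:(split; nra).
move=> /(Rmult_le_compat_l h _ _ (Rlt_le _ _ hh)).
have := IH ltac:(nra); nra.
Qed.

Lemma derivative_lower_bound_chord c : 0 <= c ->
  (forall s, 0 <= s <= 1 -> dphi 0 - c * s <= dphi s) ->
  dphi 0 - c / 2 <= phi 1 - phi 0.
Proof.
move=> hc0 hc.
apply: Rle_plus_epsilon => eps heps.
have [N [hN hN0]] := archimed_cor1 (2 * eps / (c + 1)) ltac:(apply: Rdiv_lt_0_compat; lra).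
have hNpos : 0 < INR N by apply: lt_0_INR.
have := derivative_lower_bound_grid (m := N) hc (Rinv_0_lt_compat _ hNpos).
rewrite Rinv_r; last by lra.
move=> /(_ (Rle_refl 1)).
have -> : 1 * dphi 0 = dphi 0 by ring.
(* the grid error c (N + 1) / (2 N) exceeds c / 2 by c / (2 N) < eps *)
have -> : c * (/ INR N * / INR N) * (INR N * (INR N + 1) / 2)
          = c / 2 + c * / INR N / 2 by field; lra.
have : c * / INR N <= 2 * eps.
  apply: Rle_trans (Rmult_le_compat_l c _ _ hc0 (Rlt_le _ _ hN)) _.
  rewrite /Rdiv -Rmult_assoc (Rmult_comm c) Rmult_assoc.
  have : c * / (c + 1) <= 1.
    by apply/(Rmult_le_reg_r (c + 1)); [lra | rewrite Rmult_assoc Rinv_l; lra].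
  nra.
lra.
Qed.

End Slopes.

Definition ray n (y w : vec n) (s : R) : vec n := fun i => y i + s * w i.

Lemma ray0 n (y w : vec n) : ray y w 0 = y.
Proof. by apply: functional_extensionality => i; rewrite /ray; lra. Qed.

Lemma ray_sub n (y w : vec n) r s : vsub (ray y w r) (ray y w s) = vscale (r - s) w.
Proof. by apply: functional_extensionality => i; rewrite /vsub /ray /vscale; lra. Qed.

Section Ray.
Variables (n : nat) (u : vec n) (f : vec n -> R) (g : vec n -> vec n).
Hypothesis f_gradient : has_gradient u f g.
Hypothesis f_DR : DR_submodular u f.
Variables (y w : vec n).
Hypotheses (y_box : in_box u y) (w_ge0 : vle (vzero n) w) (end_box : in_box u (ray y w 1)).

Lemma ray_le s s' : s <= s' -> vle (ray y w s) (ray y w s').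
Proof. by move=> hs i; rewrite /ray; have := w_ge0 i; rewrite /vzero; nra. Qed.

Lemma ray_in_box s : 0 <= s <= 1 -> in_box u (ray y w s).
Proof.
move=> hs; apply: (in_box_between y_box end_box); last by apply: ray_le; lra.
by rewrite -{1}(ray0 y w); apply: ray_le; lra.
Qed.

Lemma concave_on_unit_ray : concave_on_unit (fun s => f (ray y w s)).
Proof.
move=> a b h ha hab hh hbh.
have e s : ray y w (s + h) = vadd (ray y w s) (vscale h w).
  by apply: functional_extensionality => i; rewrite /vadd /ray /vscale; lra.
rewrite !e; apply: DR_submodular_vadd; rewrite -?e; try apply: ray_in_box; try lra.
- exact: f_DR.
- exact: ray_le.
- by move=> i; rewrite /vscale /vzero; have := w_ge0 i; rewrite /vzero; nra.
Qed.

Lemma derivative_on_unit_ray :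
  derivative_on_unit (fun s => f (ray y w s)) (fun s => dot (g (ray y w s)) w).
Proof.
move=> s hs eps heps.
have hw := norm_ge0 w.
set k := / (norm w + 1).
have hk : 0 < k by apply: Rinv_0_lt_compat; lra.
have hk1 : k * (norm w + 1) = 1 by apply: Rinv_l; lra.
have [delta [hdelta hd]] := f_gradient (ray_in_box hs) (Rmult_lt_0_compat _ _ heps hk).
exists (delta * k); split; first exact: Rmult_lt_0_compat.
move=> r hr hrs.
have hrs0 := Rabs_pos (r - s).
have hsmall : Rabs (r - s) * norm w < delta.
  have := Rmult_lt_compat_r (norm w + 1) _ _ ltac:(lra) hrs; nra.
have := hd _ (ray_in_box hr); rewrite ray_sub norm_scale dot_scaler.
move=> /(_ hsmall) /Rle_trans; apply.
rewrite (_ : eps * k * _ = eps * Rabs (r - s) * (k * norm w)); last by ring.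
have : 0 <= eps * Rabs (r - s) by nra.
nra.
Qed.

Lemma DR_ray_increment_le : f (ray y w 1) - f y <= dot (g y) w.
Proof.
have := chord_le_derivative0 concave_on_unit_ray derivative_on_unit_ray.
by rewrite /= ray0.
Qed.

Lemma DR_ray_chord s : 0 <= s <= 1 -> (1 - s) * f y + s * f (ray y w 1) <= f (ray y w s).
Proof.
move=> hs; have := concave_on_unit_chord concave_on_unit_ray derivative_on_unit_ray hs.
by rewrite /= ray0.
Qed.

Lemma DR_ray_descent L : lipschitz_grad u g L -> 0 <= L ->
  dot (g y) w - L / 2 * (norm w * norm w) <= f (ray y w 1) - f y.
Proof.
move=> g_lip hL.
have hw := norm_ge0 w.
have hc : 0 <= L * (norm w * norm w) by nra.
have := derivative_lower_bound_chord concave_on_unit_ray derivative_on_unit_ray hc.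
rewrite /= ray0 (_ : L * (norm w * norm w) / 2 = L / 2 * (norm w * norm w)); last by field.
apply=> s hs.
have hlip := g_lip _ _ (ray_in_box hs) y_box.
have e : vsub (ray y w s) y = vscale s w by rewrite -{2}(ray0 y w) ray_sub Rminus_0_r.
rewrite e norm_scale Rabs_pos_eq in hlip; last by lra.
have hcs := cauchy_schwarz (vsub (g (ray y w s)) (g y)) w.
rewrite dot_subl -Rabs_Ropp in hcs.
have := Rle_trans _ _ _ (Rle_abs _) hcs.
have := Rmult_le_compat_r (norm w) _ _ hw hlip.
nra.
Qed.

End Ray.

Definition vmax n (x y : vec n) : vec n := fun i => Rmax (x i) (y i).

Lemma DR_vmax_ge n (u : vec n) f g (x xs : vec n) rho :
  has_gradient u f g -> DR_submodular u f -> (forall y, in_box u y -> 0 <= f y) ->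
  in_box u x -> in_box u xs -> 0 <= rho <= 1 -> (forall i, x i <= (1 - rho) * u i) ->
  rho * f xs <= f (vmax x xs).
Proof.
move=> f_gradient f_DR f_ge0 [x0 xu] [xs0 xsu] hrho hx.
have [hrho1|hrho1] := Req_dec rho 1.
  have -> : vmax x xs = xs.
    apply: functional_extensionality => i; rewrite /vmax Rmax_right //.
    by have := hx i; have := xs0 i; rewrite /vzero hrho1; lra.
  by rewrite hrho1; lra.
(* max(x, xs) lies at time 1 - rho on a ray from xs that stays in the box up to time 1 *)
set th := 1 - rho.
have hth : 0 < th by rewrite /th; lra.
have hth1 : th <= 1 by rewrite /th; lra.
set w := vscale (/ th) (vsub (vmax x xs) xs).
have hmax i : 0 <= Rmax (x i) (xs i) - xs i <= th * (u i - xs i).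
  have := hx i; have := xs0 i; have := xsu i; rewrite /vzero -/th.
  by move=> h1 h2 h3; rewrite /Rmax; case: Rle_dec => hle; split; nra.
have w_ge0 : vle (vzero n) w.
  by move=> i; rewrite /w /vscale /vsub /vmax /vzero; have := hmax i;
    have := Rinv_0_lt_compat _ hth; nra.
have ray_th : ray xs w th = vmax x xs.
  by apply: functional_extensionality => i; rewrite /ray /w /vscale /vsub; field; lra.
have end_box : in_box u (ray xs w 1).
  split=> i; rewrite /ray /w /vscale /vsub /vzero Rmult_1_l.
  - by have := w_ge0 i; have := xs0 i; rewrite /w /vscale /vsub /vzero; lra.
  - have := hmax i; rewrite /vmax => hmi.
    have : / th * (Rmax (x i) (xs i) - xs i) <= u i - xs i.
      apply/(Rmult_le_reg_l th) => //; rewrite -Rmult_assoc Rinv_r; lra.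
    lra.
have := DR_ray_chord f_gradient f_DR (conj xs0 xsu) w_ge0 end_box (s := th) ltac:(lra).
rewrite ray_th (_ : 1 - th = rho); last by rewrite /th; ring.
have := f_ge0 _ end_box; nra.
Qed.

Lemma exp_le a b : a <= b -> exp a <= exp b.
Proof. by case/Rle_lt_or_eq_dec => [/exp_increasing/Rlt_le|->]; [|exact: Rle_refl]. Qed.

Lemma exp_mulnr a m : exp a ^ m = exp (INR m * a).
Proof.
elim: m => [|m IH]; first by rewrite /= Rmult_0_l exp_0.
by rewrite -tech_pow_Rmult IH -exp_plus S_INR; f_equal; ring.
Qed.

Lemma mul_exp_neg_le1 s : s * exp (- s) <= 1.
Proof.
have := exp_ineq1_le s; have := exp_pos (- s).
have : exp s * exp (- s) = 1 by rewrite -exp_plus Rplus_opp_r exp_0.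
nra.
Qed.

Lemma exp_neg_le_one_minus gam : 0 < gam <= 1 / 5 -> exp (- (gam * (1 + gam))) <= 1 - gam.
Proof.
move=> hgam; set a := gam * (1 + gam).
have ha : 0 <= a by rewrite /a; nra.
(* exp a >= (1 + a/2)^2 >= 1 / (1 - gam) *)
have h1 := exp_ineq1_le (a / 2).
have h2 : exp a = exp (a / 2) * exp (a / 2) by rewrite -exp_plus; f_equal; field.
have h3 : 1 <= (1 - gam) * ((1 + a / 2) * (1 + a / 2)) by rewrite /a; nra.
have h4 : (1 + a / 2) * (1 + a / 2) <= exp a by rewrite h2; nra.
have e : exp (- a) * exp a = 1 by rewrite -exp_plus Rplus_opp_l exp_0.
have := exp_pos (- a); nra.
Qed.

Lemma exp_le_pow_one_minus gam m : 0 < gam <= 1 / 5 -> INR m * gam <= 1 ->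
  exp (- ((INR m + 1) * gam)) <= (1 - gam) ^ m.
Proof.
move=> hgam hm.
apply: Rle_trans (pow_incr _ _ m (conj (Rlt_le _ _ (exp_pos _)) (exp_neg_le_one_minus hgam))).
rewrite exp_mulnr; apply: exp_le.
have := pos_INR m; nra.
Qed.

Lemma exp_last_step gam s : 0 < gam -> 0 <= s <= 1 -> 1 - s <= gam ->
  exp (-1) - gam * gam <= exp (- s) * (s * s + (1 - s) * (1 - gam)).
Proof.
move=> hgam hs hd.
set d := 1 - s.
have e : exp (- s) = exp (-1) * exp d by rewrite -exp_plus /d; f_equal; ring.
have h1 := exp_ineq1_le d.
have h2 : exp (- s) <= 1 by rewrite -exp_0; apply: exp_le; lra.
have h3 := exp_pos (-1).
(* exp (-s) = exp (-1) exp d >= exp (-1) (1 + d), and (1 + d) (1 - d + d^2) = 1 + d^3 *)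
have A : exp (-1) <= exp (- s) * (1 - d + d * d).
  have hq : 0 <= 1 - d + d * d by nra.
  have : exp (-1) * ((1 + d) * (1 - d + d * d)) <= exp (- s) * (1 - d + d * d).
    by rewrite e Rmult_assoc; apply: Rmult_le_compat_l; [lra | nra].
  have hd0 : 0 <= d by rewrite /d; lra.
  have : 0 <= d * d * d by apply: Rmult_le_pos; [nra | lra].
  rewrite (_ : (1 + d) * (1 - d + d * d) = 1 + d * d * d); last by ring.
  nra.
have B : exp (- s) * (d * gam) <= gam * gam.
  have : 0 <= d * gam <= gam * gam by rewrite /d; split; nra.
  have := exp_pos (- s); nra.
rewrite (_ : s * s + (1 - s) * (1 - gam) = (1 - d + d * d) - d * gam); last by rewrite /d; ring.
nra.
Qed.

Section FrankWolfe.
Variables (n : nat) (u : vec n) (f : vec n -> R) (g : vec n -> vec n) (L : R).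
Hypotheses (f_gradient : has_gradient u f g) (f_DR : DR_submodular u f)
  (f_ge0 : forall y, in_box u y -> 0 <= f y) (g_lip : lipschitz_grad u g L) (L_ge0 : 0 <= L).
Variables (P : vec n -> Prop) (D : R) (xs : vec n).
Hypotheses (P_box : forall y, P y -> in_box u y) (P_down : down_closed P)
  (P_diam : forall a b, P a -> P b -> norm (vsub a b) <= D) (xs_P : P xs).

Lemma frank_wolfe_step (x v : vec n) c rho :
  in_box u x -> P v -> vle v (vsub u x) ->
  (forall w, P w -> vle w (vsub u x) -> dot w (g x) <= dot v (g x)) ->
  0 <= c <= 1 -> 0 <= rho <= 1 -> (forall i, x i <= (1 - rho) * u i) ->
  (1 - c) * f x + c * rho * f xs - L * (c * c) * (D * D) / 2 <= f (ray x v c).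
Proof.
move=> x_box v_P v_le v_max hc hrho x_head.
have [x0 xu] := x_box; have [v0 _] := P_box v_P; have [xs0 xsu] := P_box xs_P.
(* w := max(x, xs) - x is feasible for the linear maximisation: w <= xs and w <= u - x *)
set w := vsub (vmax x xs) x.
have w_ge0 : vle (vzero n) w.
  by move=> i; rewrite /w /vsub /vzero /vmax; have := Rmax_l (x i) (xs i); lra.
have w_P : P w.
  apply: (P_down xs_P w_ge0) => i; rewrite /w /vsub /vmax.
  have := x0 i; have := xs0 i; rewrite /vzero => h1 h2.
  by have := Rmax_lub (x i) (xs i) (x i + xs i) ltac:(lra) ltac:(lra); lra.
have w_le : vle w (vsub u x).
  by move=> i; rewrite /w /vsub /vmax; have := Rmax_lub _ _ _ (xu i) (xsu i); lra.
have ray_w : ray x w 1 = vmax x xs.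
  by apply: functional_extensionality => i; rewrite /ray /w /vsub; lra.
have max_box : in_box u (ray x w 1).
  rewrite ray_w; split=> i; rewrite /vmax.
  - by have := x0 i; have := Rmax_l (x i) (xs i); rewrite /vzero; lra.
  - exact: Rmax_lub.
have join := DR_vmax_ge f_gradient f_DR f_ge0 x_box (P_box xs_P) hrho x_head.
have increment := DR_ray_increment_le f_gradient f_DR x_box w_ge0 max_box.
rewrite ray_w in increment.
have hw := v_max _ w_P w_le.
(* the step x + c v, seen as a ray of length one *)
have cv_ge0 : vle (vzero n) (vscale c v).
  by move=> i; rewrite /vscale /vzero; have := v0 i; rewrite /vzero; nra.
have ray_cv : ray x (vscale c v) 1 = ray x v c.
  by apply: functional_extensionality => i; rewrite /ray /vscale; lra.
have step_box : in_box u (ray x (vscale c v) 1).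
  split=> i; rewrite /ray /vscale /vzero; have := x0 i; have := v0 i; have := v_le i;
    rewrite /vzero /vsub; have := xu i; nra.
have descent := DR_ray_descent f_gradient f_DR x_box cv_ge0 step_box g_lip L_ge0.
rewrite ray_cv norm_scale dot_scaler Rabs_pos_eq in descent; last by lra.
have norm_v : norm v <= D.
  have zero_P : P (vzero n) by apply: (P_down xs_P) => i; [exact: Rle_refl | exact: xs0].
  have := P_diam v_P zero_P.
  by rewrite (_ : vsub v (vzero n) = v) //; apply: functional_extensionality => i;
    rewrite /vsub /vzero; lra.
have hv0 := norm_ge0 v.
rewrite !(dot_comm _ (g x)) in hw.
have gain : c * (rho * f xs - f x) <= c * dot (g x) v.
  by apply: Rmult_le_compat_l; lra.
have loss : L / 2 * (c * norm v * (c * norm v)) <= L * (c * c) * (D * D) / 2.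
  have := Rmult_le_compat _ _ _ _ hv0 hv0 norm_v norm_v.
  move=> /(Rmult_le_compat_l (c * c) _ _ ltac:(nra)); nra.
lra.
Qed.

Variables (gam : R) (x v : nat -> vec n) (t : nat -> R) (K : nat).
Hypotheses (gam_pos : 0 < gam <= 1) (run : fw_run u P g gam x v t K).

Let F := f xs.
Let E := L * D ^ 2 / 2 * gam ^ 2.

Lemma fw_step_size j : (j < K)%N -> 0 <= Rmin gam (1 - t j) <= gam.
Proof.
move=> hj; have [_ [_ [t_lt _]]] := run; have := t_lt j hj => htj.
by split; [apply: Rmin_glb; lra | exact: Rmin_l].
Qed.

Lemma fw_iterate j : (j < K)%N -> x j.+1 = ray (x j) (v j) (Rmin gam (1 - t j)).
Proof.
move=> hj; have [_ [_ [_ [_ steps]]]] := run; have [_ [hx _]] := steps j hj.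
exact: functional_extensionality.
Qed.

Lemma fw_direction j : (j < K)%N ->
  [/\ P (v j), vle (v j) (vsub u (x j))
    & forall w, P w -> vle w (vsub u (x j)) -> dot w (g (x j)) <= dot (v j) (g (x j))].
Proof.
by move=> hj; have [_ [_ [_ [_ steps]]]] := run; have [[? [? ?]] _] := steps j hj.
Qed.

Lemma fw_iterate_box j : (j <= K)%N -> in_box u (x j).
Proof.
elim: j => [|j IH] hj.
  have [x0 _] := run; have [xs0 xsu] := P_box xs_P.
  by split=> i; rewrite /vzero x0; [exact: Rle_refl | exact: Rle_trans (xs0 i) (xsu i)].
have hj' : (j < K)%N by [].
have [x0 xu] := IH (ltnW hj'); have hc := fw_step_size hj'.
have [v_P v_le _] := fw_direction hj'; have [v0 _] := P_box v_P.
rewrite fw_iterate //; split=> i; rewrite /ray /vzero;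
  have := x0 i; have := xu i; have := v0 i; have := v_le i; rewrite /vsub /vzero; nra.
Qed.

Lemma fw_headroom j : (j <= K)%N -> forall i, x j i <= (1 - (1 - gam) ^ j) * u i.
Proof.
elim: j => [|j IH] hj i.
  by have [x0 _] := run; rewrite x0 /=; lra.
have hj' : (j < K)%N by [].
have [_ hc] := fw_step_size hj'.
have [v_P v_le _] := fw_direction hj'; have [v0 _] := P_box v_P.
have hpow : 0 <= (1 - gam) ^ j by apply: pow_le; lra.
have hu : 0 <= u i by have [xs0 xsu] := P_box xs_P; exact: Rle_trans (xs0 i) (xsu i).
(* u - x shrinks by at least the factor 1 - gam at each step *)
rewrite fw_iterate // /ray /=; have := IH (ltnW hj') i; have := v_le i; have := v0 i.
rewrite /vsub /vzero; nra.
Qed.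

Lemma fw_value_step j : (j < K)%N ->
  let c := Rmin gam (1 - t j) in
  (1 - c) * f (x j) + c * (1 - gam) ^ j * F - L * (c * c) * (D * D) / 2 <= f (x j.+1).
Proof.
move=> hj c; have [v_P v_le v_max] := fw_direction hj.
have hc : 0 <= c <= gam := fw_step_size hj.
have hpow : 0 <= (1 - gam) ^ j <= 1.
  split; first by apply: pow_le; lra.
  by rewrite -{2}(pow1 j); apply: pow_incr; lra.
rewrite fw_iterate // -/c.
apply: (frank_wolfe_step (fw_iterate_box (ltnW hj)) v_P v_le v_max _ hpow
  (fw_headroom (ltnW hj))); lra.
Qed.

Lemma fw_time j : (j < K)%N -> t j = INR j * gam.
Proof.
have [_ [t0 [t_lt [_ steps]]]] := run.
elim: j => [|j IH] hj; first by rewrite t0 /=; lra.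
have [_ [_ tj]] := steps j (ltnW hj).
(* the step is truncated only when it reaches time 1, i.e. at the last iteration *)
have full : Rmin gam (1 - t j) = gam.
  rewrite /Rmin; case: Rle_dec => // hlt.
  by have := t_lt _ hj; rewrite tj /Rmin; case: Rle_dec => //; lra.
by rewrite tj full IH ?S_INR //; [ring | exact: ltnW].
Qed.

Lemma f_xs_ge0 : 0 <= F.
Proof. by apply: f_ge0; apply: P_box. Qed.

Lemma step_error_ge0 : 0 <= E.
Proof.
rewrite /E /= !Rmult_1_r.
have := Rle_0_sqr D; have := Rle_0_sqr gam; rewrite /Rsqr => hg hD.
by apply: Rmult_le_pos; [have := Rmult_le_pos _ _ L_ge0 hD; lra | exact: hg].
Qed.

Lemma fw_step_error j : (j < K)%N ->
  L * (Rmin gam (1 - t j) * Rmin gam (1 - t j)) * (D * D) / 2 <= E.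
Proof.
move=> hj; have hc := fw_step_size hj.
have LD0 : 0 <= L * (D * D) / 2 by have := Rle_0_sqr D; rewrite /Rsqr; nra.
have : Rmin gam (1 - t j) * Rmin gam (1 - t j) <= gam * gam by nra.
move=> /(Rmult_le_compat_l _ _ _ LD0).
by rewrite /E /= !Rmult_1_r; lra.
Qed.

Lemma fw_value_lower_bound j : (j < K)%N ->
  t j.+1 * (1 - gam) ^ j * F - INR j.+1 * E <= f (x j.+1).
Proof.
have [_ [t0 [_ [_ steps]]]] := run.
have F0 := f_xs_ge0; have E0 := step_error_ge0.
elim: j => [|j IH] hj.
  have [_ [_ t1]] := steps 0%N hj.
  have := fw_value_step hj; have := fw_step_error hj; have := fw_step_size hj.
  have := f_ge0 (fw_iterate_box (leq0n K)).
  by rewrite /= t1 t0; nra.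
have [_ [_ tj]] := steps j.+1 hj.
have := IH (ltnW hj); have := fw_step_error hj; have := fw_value_step hj.
rewrite tj -tech_pow_Rmult (S_INR j.+1).
set c := Rmin gam (1 - t j.+1); set r := (1 - gam) ^ j.
have hc : 0 <= c <= gam := fw_step_size hj.
have hr : 0 <= r by apply: pow_le; lra.
have ht : 0 <= t j.+1 by rewrite fw_time //; have := pos_INR j.+1; nra.
(* (1 - c) r >= (1 - gam) r keeps the previous bound, the new step adds c (1 - gam) r F *)
have : (1 - gam) * (t j.+1 * r * F) <= (1 - c) * (t j.+1 * r * F).
  by apply: Rmult_le_compat_r; [apply: Rmult_le_pos; nra | lra].
have : 0 <= c * (INR j.+1 * E).
  by apply: Rmult_le_pos; [lra | apply: Rmult_le_pos; [apply: pos_INR | exact: E0]].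
nra.
Qed.

Lemma fw_guarantee_before_end k : (0 < k)%N -> (k < K)%N -> gam <= 1 / 5 ->
  t k * exp (- t k) * F - INR k * E <= f (x k).
Proof.
case: k => // j _ hj hgam.
have [_ [_ [t_lt _]]] := run.
have tj := fw_time hj; have := t_lt _ hj; rewrite tj S_INR => ht1.
have := fw_value_lower_bound (ltnW hj); rewrite tj S_INR.
have hcoef : 0 <= (INR j + 1) * gam * F.
  by apply: Rmult_le_pos; [have := pos_INR j; have := proj1 gam_pos; nra | exact: f_xs_ge0].
have := exp_le_pow_one_minus (m := j) (conj (proj1 gam_pos) hgam) ltac:(lra).
move=> /(Rmult_le_compat_l _ _ _ hcoef); lra.
Qed.

Lemma fw_guarantee_at_end : gam <= 1 / 5 ->
  exp (-1) * F - INR K * E - gam * gam * F <= f (x K).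
Proof.
move=> hgam.
have [_ [t0 [t_lt [tK steps]]]] := run.
(* K >= 2, since a single step of size gam <= 1/5 cannot reach time 1 *)
have [m eK] : exists m, K = m.+2.
  case: K t_lt tK steps => [|[|m]] t_lt tK steps; last by exists m.
  - by rewrite t0 in tK; lra.
  - have [_ [_ t1]] := steps 0%N isT; rewrite tK t0 Rminus_0_r in t1.
    by have := Rmin_l gam 1; lra.
have hj : (m.+1 < K)%N by rewrite eK.
have [_ [_ tlast]] := steps _ hj; rewrite -eK tK in tlast.
set s := t m.+1 in tlast.
have hs : s = (INR m + 1) * gam by rewrite /s fw_time ?S_INR //; exact: ltnW.
have hs1 : s < 1 := t_lt _ hj.
have hlast : Rmin gam (1 - s) = 1 - s by lra.
have hgap : 1 - s <= gam by rewrite -hlast; exact: Rmin_l.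
have := fw_value_step hj; have := fw_step_error hj; rewrite -/s hlast -eK.
have := fw_value_lower_bound (ltnW hj); rewrite -/s.
have hpow := exp_le_pow_one_minus (m := m) (conj (proj1 gam_pos) hgam) ltac:(lra).
rewrite -hs -/(pow _ _) in hpow.
have hs0 : 0 <= s by rewrite hs; have := pos_INR m; have := proj1 gam_pos; nra.
have hend := exp_last_step (proj1 gam_pos) (conj hs0 (Rlt_le _ _ hs1)) hgap.
move=> before error /= last.
rewrite (_ : 1 - (1 - s) = s) in last; last by ring.
rewrite eK !S_INR in before *.
set r := (1 - gam) ^ m in hpow before last; set q := s * s + (1 - s) * (1 - gam) in hend.
have F0 := f_xs_ge0; have E0 := step_error_ge0.
have hq : 0 <= q by rewrite /q; have := proj2 gam_pos; nra.
have p1 := Rmult_le_compat_l s _ _ hs0 before.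
have p2 : s * ((INR m + 1) * E) <= (INR m + 1) * E.
  have hm := pos_INR m.
  have : 0 <= (INR m + 1) * E by apply: Rmult_le_pos; lra.
  nra.
have p3 : exp (- s) * q * F <= r * q * F.
  by apply: Rmult_le_compat_r => //; apply: Rmult_le_compat_r.
have p4 := Rmult_le_compat_r F _ _ F0 hend.
rewrite /q in p3 p4; rewrite eK in last; nra.
Qed.

(* C = 25 handles the regime gam > 1/5, where 25 gam^2 f(xs) >= f(xs) makes the bound trivial *)
Lemma fw_guarantee k : (1 <= k)%N -> (k <= K)%N ->
  f (x k) >= t k * exp (- t k) * F - L * D ^ 2 / 2 * INR k * gam ^ 2 - 25 * gam ^ 2 * F.
Proof.
move=> hk1 hkK.
have F0 := f_xs_ge0; have E0 := step_error_ge0.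
have hfk := f_ge0 (fw_iterate_box hkK).
have hk0 := pos_INR k.
have htex := Rmult_le_compat_r F _ _ F0 (mul_exp_neg_le1 (t k)).
have hgF : 0 <= gam ^ 2 * F by apply: Rmult_le_pos => //; exact: pow2_ge_0.
rewrite (_ : L * D ^ 2 / 2 * INR k * gam ^ 2 = INR k * E); last by rewrite /E; ring.
apply: Rle_ge.
have [hbig|hgam] := Rlt_le_dec (1 / 5) gam.
  have h25 : 1 <= 25 * gam ^ 2 by rewrite /=; nra.
  have := Rmult_le_compat_r F _ _ F0 h25.
  by have := Rmult_le_pos _ _ hk0 E0; lra.
have [hkK'|->] : (k < K)%N \/ k = K by rewrite ltn_neqAle; case: eqP => [->|]; [right|left].
  by have := fw_guarantee_before_end hk1 hkK' hgam; lra.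
have [_ [_ [_ [tK _]]]] := run.
have := fw_guarantee_at_end hgam; rewrite tK (_ : - (1) = -1) /=; last by ring.
lra.
Qed.

End FrankWolfe.

Lemma lipschitz_grad_le n (u : vec n) g L L' :
  L <= L' -> lipschitz_grad u g L -> lipschitz_grad u g L'.
Proof.
move=> hLL' hL y z hy hz; apply: Rle_trans (hL _ _ hy hz) _.
by apply: Rmult_le_compat_r => //; exact: norm_ge0.
Qed.

Lemma lipschitz_grad_neg_diameter n (u : vec n) g L (P : vec n -> Prop) D :
  lipschitz_grad u g L -> (forall y, P y -> in_box u y) -> is_diameter P D -> L < 0 -> D = 0.
Proof.
move=> hL hP [_ [a [b [ha [hb <-]]]]] hneg.
have := hL _ _ (hP _ ha) (hP _ hb).
have := norm_ge0 (vsub (g a) (g b)); have := norm_ge0 (vsub a b); nra.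
Qed.

Theorem theorem2 :
  exists C : R, 0 <= C /\
  forall (n : nat) (u : vec n) (f : vec n -> R) (g : vec n -> vec n) (L : R)
    (P : vec n -> Prop) (D : R) (xstar : vec n) (gamma : R)
    (x v : nat -> vec n) (t : nat -> R) (K : nat),
    (forall i, 0 < u i) ->
    has_gradient u f g ->
    (forall y, in_box u y -> 0 <= f y) ->
    DR_submodular u f ->
    lipschitz_grad u g L ->
    (forall y, P y -> in_box u y) ->
    (exists y, P y) ->
    compact_set P -> convex_set P -> down_closed P ->
    is_diameter P D ->
    P xstar -> (forall y, P y -> f y <= f xstar) ->
    0 < gamma <= 1 ->
    fw_run u P g gamma x v t K ->
    forall k : nat, (1 <= k)%nat -> (k <= K)%nat ->
      f (x k) >= t k * exp (- t k) * f xstar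
                 - L * D ^ 2 / 2 * INR k * gamma ^ 2
                 - C * gamma ^ 2 * f xstar.
Proof.
exists 25; split; first lra.
move=> n u f g L P D xs gam x v t K _ hg hf0 hDR hL hP _ _ _ hdown hdiam hxs _ hgam hrun.
have hdiamle : forall a b, P a -> P b -> norm (vsub a b) <= D by case: hdiam.
have [hL0|hneg] := Rle_lt_dec 0 L.
  exact: (fw_guarantee hg hDR hf0 hL hL0 hP hdown hdiamle hxs hgam hrun).
(* L < 0 forces P to be a single point, so the L-term vanishes *)
have hD0 := lipschitz_grad_neg_diameter hL hP hdiam hneg.
have hL0 := lipschitz_grad_le (Rlt_le _ _ hneg) hL.
move=> k hk1 hkK.
have := fw_guarantee hg hDR hf0 hL0 (Rle_refl 0) hP hdown hdiamle hxs hgam hrun hk1 hkK.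
by rewrite hD0 /=; lra.
Qed.
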